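(* Let $a,d,k,c$ be positive integers such that $\gcd(a,a+d,\ldots,a+kd,c)=1$, and let $\mathcal{S}=\langle a,a+d,a+2d,\ldots,a+kd,c\rangle$. Then $\mathrm{type}(\mathcal{S})\le 2k$.
   Context: $\langle b_1,\ldots,b_t\rangle$ denotes the numerical semigroup of all non-negative integer linear combinations of $b_1,\ldots,b_t$ (such semigroups with generators $a,a+d,\ldots,a+kd,c$ are called AA-semigroups). A pseudo-Frobenius number of a numerical semigroup $\mathcal{S}$ is an integer $x\notin\mathcal{S}$ with $x+s\in\mathcal{S}$ for every nonzero $s\in\mathcal{S}$; $\mathrm{type}(\mathcal{S})$ is the number of pseudo-Frobenius numbers. *)

From HB Require Import structures.
From mathcomp Require Import all_boot all_order all_algebra.
Set Implicit Arguments. Unset Strict Implicit. Unset Printing Implicit Defensive.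
Import GRing.Theory Num.Theory.

Definition in_sg (g : seq nat) (n : nat) : Prop :=
  exists cs : seq nat, size cs = size g /\
    n = sumn [seq p.1 * p.2 | p <- zip cs g].

Definition in_sgZ (g : seq nat) (x : int) : Prop :=
  exists n : nat, x = Posz n /\ in_sg g n.

Definition gcd_seq (g : seq nat) : nat := foldr gcdn 0%N g.

Definition pseudo_frobenius (g : seq nat) (x : int) : Prop :=
  ~ in_sgZ g x /\
  forall s : nat, (0 < s)%N -> in_sg g s -> in_sgZ g (x + Posz s)%R.

Definition AA_gens (a d k c : nat) : seq nat :=
  [seq a + i * d | i <- iota 0 k.+1] ++ [:: c].

From HB Require Import structures.
From mathcomp Require Import all_boot all_order all_algebra zify.
From Stdlib Require Import Classical IndefiniteDescription.
Set Implicit Arguments. Unset Strict Implicit. Unset Printing Implicit Defensive.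
Import GRing.Theory Num.Theory Order.TTheory.

(** A representation of [f + c] using [c] would put [f] in the semigroup, so
   [f + c = nn * a + j * d] with [j <= k * nn]; choosing [j] minimal, [f] is
   encoded by the point [(j, k * nn - j)].  Differences of such encodings are
   relations among the generators, and the positive relations form a cone that
   is totally ordered (lexicographically by the multiple of [c], then by the
   first coordinate).  Pseudo-Frobenius numbers become maximal gaps: points
   outside the upset of the cone from which every generator step [(i, k - i)],
   [i <= k], leads into it.  The minimal elements of the cone on the two axes
   and the one with least abscissa in between cut the complement of the upset
   into the union of two rectangles, and a maximal gap of a rectangle lies in
   the last [k] columns and is determined by its column, so there are at most
   [2 * k] of them. *)

Lemma in_sg_nil n : in_sg [::] n <-> n = 0.
Proof.
split; first by case=> [[|? ?] [//= _ ->]].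
by move=> ->; exists [::].
Qed.

Lemma in_sg_cons g0 g n :
  in_sg (g0 :: g) n <-> exists c0 m, in_sg g m /\ n = c0 * g0 + m.
Proof.
split.
- case=> [[|c0 cs] [//= [size_cs] ->]].
  by exists c0, (sumn [seq p.1 * p.2 | p <- zip cs g]); split => //; exists cs.
- case=> [c0 [m [[cs [size_cs ->]] ->]]].
  by exists (c0 :: cs); rewrite /= size_cs.
Qed.

Definition progression_gens (a d c s m : nat) : seq nat :=
  [seq a + i * d | i <- iota s m] ++ [:: c].

Lemma progression_gensS a d c s m :
  progression_gens a d c s m.+1 = a + s * d :: progression_gens a d c s.+1 m.
Proof. by []. Qed.

(* [nn] counts the generators [a + i * d] used, [j] the sum of their indices [i]. *)
Lemma in_sg_progression a d c m s n : in_sg (progression_gens a d c s m) n ->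
  exists nn j t, [/\ s * nn <= j, j + nn <= (s + m) * nn & n = nn * a + j * d + t * c].
Proof.
elim: m s n => [|m IHm] s n.
- rewrite /progression_gens /= in_sg_cons => [[t [n' [/in_sg_nil -> ->]]]].
  by exists 0, 0, t; rewrite !muln0 !addn0.
- rewrite progression_gensS in_sg_cons => [[c0 [n' [/IHm [nn [j [t [le_j le_nn ->]]]] ->]]]].
  by exists (c0 + nn), (s * c0 + j), t; split; nia.
Qed.

Lemma progression_in_sg a d c m s nn j t : s * nn <= j -> j + nn <= (s + m) * nn ->
  in_sg (progression_gens a d c s m) (nn * a + j * d + t * c).
Proof.
elim: m s nn j => [|m IHm] s nn j le_j le_nn.
- have [-> ->] : nn = 0 /\ j = 0 by nia.
  rewrite /progression_gens /= in_sg_cons; exists t, 0.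
  by split; [apply/in_sg_nil | lia].
- rewrite progression_gensS in_sg_cons.
  have [le_nn_e|lt_e_nn] := leqP nn (j - s * nn).
  + exists 0, (nn * a + j * d + t * c); split; last by lia.
    by apply: IHm; nia.
  + pose e := j - s * nn.
    (* [nn - e] copies of [a + s * d], and [e] generators of higher index *)
    exists (nn - e), (e * a + (j - s * (nn - e)) * d + t * c); split; last by nia.
    have le_e_me : e <= m * e by case: m {IHm} le_nn => [|m] ?; nia.
    by apply: IHm; nia.
Qed.

Lemma in_sg_AA_gens a d k c n : in_sg (AA_gens a d k c) n <->
  exists nn j t, j <= k * nn /\ n = nn * a + j * d + t * c.
Proof.
split.
- move=> /(@in_sg_progression a d c k.+1 0) [nn [j [t [_ le_nn ->]]]].
  by exists nn, j, t; split => //; nia.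
- by move=> [nn [j [t [le_j ->]]]]; apply: (@progression_in_sg a d c k.+1 0); nia.
Qed.

Lemma exists_minimal_nat (Q : nat -> Prop) n :
  Q n -> exists2 m, Q m & forall p, Q p -> m <= p.
Proof.
elim/ltn_ind: n => n IHn Qn.
have [[p [lt_pn Qp]]|no_smaller] := classic (exists p, p < n /\ Q p).
  exact: IHn Qp.
exists n => // p Qp; rewrite leqNgt; apply/negP => lt_pn.
by apply: no_smaller; exists p.
Qed.

Lemma uniq_size_le_code (T : eqType) (l : seq T) (n : nat) (R : T -> nat -> Prop) :
  uniq l -> (forall t, t \in l -> exists2 v, v < n & R t v) ->
  (forall t t' v, t \in l -> t' \in l -> R t v -> R t' v -> t = t') ->
  size l <= n.
Proof.
move=> l_uniq R_total R_inj.
have R_choice t : exists v, t \in l -> v < n /\ R t v.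
  by case: (boolP (t \in l)) => [/R_total[v]|_]; [exists v | exists 0].
pose code t := proj1_sig (constructive_indefinite_description _ (R_choice t)).
have code_spec t : t \in l -> code t < n /\ R t (code t).
  exact: proj2_sig (constructive_indefinite_description _ (R_choice t)).
rewrite -(size_map code) -(size_iota 0 n); apply: uniq_leq_size.
- rewrite map_inj_in_uniq // => t t' tl t'l eq_code.
  have [_ Rt] := code_spec t tl; have [_ Rt'] := code_spec t' t'l.
  by apply: (R_inj _ _ (code t) tl t'l) => //; rewrite eq_code.
- by move=> v /mapP[t tl ->]; rewrite mem_iota add0n; case: (code_spec t tl).
Qed.

Local Open Scope ring_scope.

Lemma exists_minimal_int (Q : int -> Prop) (lb : int) :
  (forall x, Q x -> lb <= x) -> (exists x, Q x) ->
  exists2 x, Q x & forall y, Q y -> x <= y.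
Proof.
move=> Q_ge [x Qx].
have shift z : Q z -> Q (lb + `|z - lb|%N%:Z).
  by move=> Qz; have := Q_ge z Qz => ?; rewrite (_ : _ + _ = z) //; lia.
have [m Qm m_min] := @exists_minimal_nat (fun n : nat => Q (lb + n%:Z)) _ (shift x Qx).
by exists (lb + m%:Z) => // y Qy; have := m_min _ (shift y Qy); have := Q_ge y Qy; lia.
Qed.

Lemma eq_of_dvdz_window (k : nat) (x y y' : int) :
  (k%:Z %| x + y)%Z -> (k%:Z %| x + y')%Z -> y' - k%:Z < y -> y < y' + k%:Z -> y = y'.
Proof. by move=> /dvdzP[q ?] /dvdzP[q' ?] ? ?; case: (ltrgtP q q') => ?; nia. Qed.

Definition dominates (P : int -> int -> Prop) (x y : int) : Prop :=
  exists m1 m2, [/\ P m1 m2, m1 <= x & m2 <= y].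

Definition maximal_gap (k : nat) (P : int -> int -> Prop) (x y : int) : Prop :=
  [/\ 0 <= x, 0 <= y, (k%:Z %| x + y)%Z, ~ dominates P x y &
      forall i : nat, (i <= k)%N -> dominates P (x + i%:Z) (y + k%:Z - i%:Z)].

Lemma rectangle_exit_window (k : nat) (A C x y : int) : x < A -> y < C ->
  (forall i : nat, (i <= k)%N -> ~ (x + i%:Z < A /\ y + k%:Z - i%:Z < C)) ->
  A - k%:Z <= x /\ C - k%:Z + (A - 1 - x) <= y.
Proof.
move=> lt_xA lt_yC exits.
have le_A_xk : A <= x + k%:Z.
  by rewrite leNgt; apply/negP => ?; apply: (exits k (leqnn k)); lia.
split; first by lia.
have [i Ei] : exists i : nat, A - 1 - x = i%:Z by exists (absz (A - 1 - x)%R); lia.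
by rewrite leNgt; apply/negP => ?; apply: (exits i); lia.
Qed.

Section MaximalGaps.

Variables (k : nat) (P : int -> int -> Prop).

Hypothesis P_total : forall x y x' y', P x y -> P x' y' -> (x, y) <> (x', y') ->
  P (x' - x) (y' - y) \/ P (x - x') (y - y').
Hypothesis P_pos : forall x y, P x y -> 0 < x \/ 0 < y.
Hypothesis P_xaxis : exists x y, P x y /\ y <= 0.
Hypothesis P_yaxis : exists x y, P x y /\ x <= 0.

Lemma inner_corner (X Y : int) :
  (forall m1 m2, P m1 m2 -> m2 <= 0 -> X <= m1) ->
  (forall m1 m2, P m1 m2 -> m1 <= 0 -> Y <= m2) ->
  exists I1 I2, [/\ I1 <= X, I2 <= Y,
    forall m1 m2, P m1 m2 -> [\/ X <= m1, Y <= m2 | I1 <= m1 /\ I2 <= m2] &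
    (I1, I2) = (X, Y) \/ P I1 I2].
Proof.
move=> X_min Y_min.
pose inner m1 m2 := [/\ P m1 m2, 0 < m1 < X & 0 < m2 < Y].
have outer_or_inner m1 m2 : P m1 m2 -> [\/ X <= m1, Y <= m2 | inner m1 m2].
  move=> Pm; case: (lerP X m1) => ?; first by constructor 1.
  case: (lerP Y m2) => ?; first by constructor 2.
  have ? : 0 < m2 by rewrite ltNge; apply/negP => /(X_min _ _ Pm); lia.
  have ? : 0 < m1 by rewrite ltNge; apply/negP => /(Y_min _ _ Pm); lia.
  by constructor 3; split=> //; apply/andP.
have [some_inner|no_inner] := classic (exists m1 m2, inner m1 m2); last first.
  exists X, Y; split; [exact: lexx | exact: lexx | | by left].
  move=> m1 m2 /outer_or_inner[?|?|?]; [by constructor 1 | by constructor 2 |].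
  by case: no_inner; exists m1, m2.
have inner_ge0 m1 : (exists m2, inner m1 m2) -> 0 <= m1.
  by case=> m2 [_ /andP[? _] _]; lia.
have [I1 [I2 [PI /andP[? ?] /andP[? ?]]] I1_min] := exists_minimal_int inner_ge0 some_inner.
have I2_min m1 m2 : inner m1 m2 -> I2 <= m2.
  move=> [Pm /andP[? ?] /andP[? ?]]; rewrite leNgt; apply/negP => ?.
  have le_I1m1 : I1 <= m1 by apply: I1_min; exists m2; split=> //; apply/andP.
  have neq_Im : (I1, I2) <> (m1, m2) by case=> _ ?; lia.
  case: (P_total PI Pm neq_Im) => [Pd|Pd].
  - by have := X_min _ _ Pd ltac:(lia); lia.
  - by have := Y_min _ _ Pd ltac:(lia); lia.
exists I1, I2; split; [lia | lia | | by right].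
move=> m1 m2 /outer_or_inner[?|?|inner_m]; [by constructor 1 | by constructor 2 |].
by constructor 3; split; [apply: I1_min; exists m2 | exact: I2_min inner_m].
Qed.

Lemma gaps_two_rectangles : exists A1 C1 A2 C2 : int, forall x y, 0 <= x -> 0 <= y ->
  ~ dominates P x y <-> (x < A1 /\ y < C1) \/ (x < A2 /\ y < C2).
Proof.
have [X [yX [PX yX_le0]] X_min] :
    exists2 X, (exists y, P X y /\ y <= 0) & forall x, (exists y, P x y /\ y <= 0) -> X <= x.
  by apply: (@exists_minimal_int _ 0) => // x [y [/P_pos Pxy ?]]; lia.
have [Y [xY [PY xY_le0]] Y_min] :
    exists2 Y, (exists x, P x Y /\ x <= 0) & forall y, (exists x, P x y /\ x <= 0) -> Y <= y.
  apply: (@exists_minimal_int _ 0) => [y [x [/P_pos Pxy ?]]|]; first by lia.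
  by case: P_yaxis => x [y ?]; exists y, x.
have [I1 [I2 [le_I1X le_I2Y P_split I_corner]]] := @inner_corner X Y
  (fun m1 m2 Pm m2_le0 => X_min m1 (ex_intro _ m2 (conj Pm m2_le0)))
  (fun m1 m2 Pm m1_le0 => Y_min m2 (ex_intro _ m1 (conj Pm m1_le0))).
exists I1, Y, X, I2 => x y x_ge0 y_ge0; split.
- move=> not_dom.
  have lt_xX : x < X by rewrite ltNge; apply/negP => ?; apply: not_dom; exists X, yX; split=> //; lia.
  have lt_yY : y < Y by rewrite ltNge; apply/negP => ?; apply: not_dom; exists xY, Y; split=> //; lia.
  case: I_corner => [[-> _]|PI]; first by left.
  case: (ltrP x I1) => ?; first by left.
  case: (ltrP y I2) => ?; first by right.
  by case: not_dom; exists I1, I2.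
- by move=> in_rect [m1 [m2 [/P_split[?|?|[? ?]] ? ?]]]; lia.
Qed.

Lemma maximal_gap_code : exists code : int -> int -> nat,
  (forall x y, maximal_gap k P x y -> (code x y < 2 * k)%N) /\
  (forall x y x' y', maximal_gap k P x y -> maximal_gap k P x' y' ->
     code x y = code x' y' -> (x, y) = (x', y')).
Proof.
have [A1 [C1 [A2 [C2 gapsE]]]] := gaps_two_rectangles.
pose in_R1 x y := (x < A1) && (y < C1).
pose window A C x y := [/\ A - k%:Z <= x, x < A, C - k%:Z + (A - 1 - x) <= y & y < C].
have gap_window x y : maximal_gap k P x y ->
    if in_R1 x y then window A1 C1 x y else window A2 C2 x y.
  case=> x_ge0 y_ge0 _ not_dom segment.
  have exits A C : (A = A1 /\ C = C1) \/ (A = A2 /\ C = C2) -> x < A -> y < C ->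
      window A C x y.
    move=> rect lt_xA lt_yC.
    have [? ?] : A - k%:Z <= x /\ C - k%:Z + (A - 1 - x) <= y.
      apply: rectangle_exit_window => // i le_ik ?.
      by apply: ((gapsE _ _ _ _).2 _ (segment i le_ik)); lia.
    by split.
  rewrite /in_R1; case: ifP => [/andP[? ?]|not_R1]; first by apply: exits => //; left.
  case: ((gapsE x y x_ge0 y_ge0).1 not_dom) => [[lt_xA1 lt_yC1]|[? ?]].
    by rewrite lt_xA1 lt_yC1 in not_R1.
  by apply: exits => //; right.
exists (fun x y => if in_R1 x y then absz (A1 - 1 - x)%R else (k + absz (A2 - 1 - x)%R)%N).
split=> [x y /gap_window|x y x' y' gap gap'].
  by case: ifP => _ [? ? ? ?]; lia.
have [_ _ dvd _ _] := gap; have [_ _ dvd' _ _] := gap'.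
move: (gap_window _ _ gap) (gap_window _ _ gap') => /=.
case: ifP => _; case: ifP => _ [? ? ? ?] [? ? ? ?] eq_code; try lia.
all: have eq_x : x = x' by lia.
all: by subst x'; congr pair; apply: (eq_of_dvdz_window dvd dvd'); lia.
Qed.

End MaximalGaps.

(* [(x, y)] records a relation [np * a + x * d = t * c] between [np] generators
   [a + i * d] with indices summing to [x], padded by the slack [y = k * np - x];
   the cone consists of the relations that are positive for the lexicographic
   order on [(t, x)]. *)
Definition AA_cone (a d k c : nat) (x y : int) : Prop :=
  exists np t : int, [/\ x + y = k%:Z * np, a%:Z * np + d%:Z * x = c%:Z * t &
                         0 < t \/ t = 0 /\ 0 < x].

Lemma AA_cone_total a d k c : (0 < a)%N -> forall x y x' y',
  AA_cone a d k c x y -> AA_cone a d k c x' y' -> (x, y) <> (x', y') ->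
  AA_cone a d k c (x' - x) (y' - y) \/ AA_cone a d k c (x - x') (y - y').
Proof.
move=> a_gt0 x y x' y' [np [t [sum_xy rel pos]]] [np' [t' [sum_xy' rel' pos']]] neq.
have [lt_t|lt_t|eq_t] := ltrgtP t t'.
- by left; exists (np' - np), (t' - t); split; [lia | lia | left; lia].
- by right; exists (np - np'), (t - t'); split; [lia | lia | left; lia].
have [lt_x|lt_x|eq_x] := ltrgtP x x'.
- by left; exists (np' - np), (t' - t); split; [lia | lia | right; lia].
- by right; exists (np - np'), (t - t'); split; [lia | lia | right; lia].
have eq_np : np = np' by nia.
by case: neq; congr pair; lia.
Qed.

Lemma AA_cone_pos a d k c : (0 < k)%N -> (0 < c)%N -> forall x y,
  AA_cone a d k c x y -> 0 < x \/ 0 < y.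
Proof.
move=> k_gt0 c_gt0 x y [np [t [sum_xy rel pos]]].
have [?|x_le0] := ltrP 0 x; first by left.
have [?|y_le0] := ltrP 0 y; first by right.
have : np <= 0 by nia.
by exfalso; case: pos => [?|[? ?]]; nia.
Qed.

Lemma AA_cone_xaxis a d k c : (0 < a)%N -> exists x y, AA_cone a d k c x y /\ y <= 0.
Proof.
move=> a_gt0; exists (k%:Z * c%:Z), 0; split=> //.
by exists c%:Z, (a%:Z + d%:Z * k%:Z); split; [lia | lia | left; nia].
Qed.

Lemma AA_cone_yaxis a d k c : (0 < a)%N -> exists x y, AA_cone a d k c x y /\ x <= 0.
Proof.
move=> a_gt0; exists 0, (k%:Z * c%:Z); split=> //.
by exists c%:Z, a%:Z; split; [lia | lia | left; lia].
Qed.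

Section PseudoFrobenius.

Variables a d k c : nat.
Hypotheses (a_gt0 : (0 < a)%N) (k_gt0 : (0 < k)%N) (c_gt0 : (0 < c)%N).
Variable f : int.
Hypothesis f_pf : pseudo_frobenius (AA_gens a d k c) f.

Lemma pf_minimal_rep : exists nn j : nat, [/\ (j <= k * nn)%N, f + c%:Z = (nn * a + j * d)%N &
  forall nn' j' : nat, (j' <= k * nn')%N -> (nn' * a + j' * d = nn * a + j * d)%N -> (j <= j')%N].
Proof.
have [not_f_sg f_add] := f_pf.
have c_sg : in_sg (AA_gens a d k c) c.
  by apply/in_sg_AA_gens; exists 0%N, 0%N, 1%N; split; lia.
have [N [EN /in_sg_AA_gens [nn [j [t [le_j EN']]]]]] := f_add c c_gt0 c_sg.
have t0 : t = 0%N.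
  case: t EN' => // t EN'; case: not_f_sg.
  exists (nn * a + j * d + t * c)%N; split; first by lia.
  by apply/in_sg_AA_gens; exists nn, j, t.
pose rep j := exists nn, (j <= k * nn)%N /\ N = (nn * a + j * d)%N.
have rep_j : rep j by exists nn; rewrite EN' t0 mul0n addn0.
have [j0 [nn0 [le_j0 EN0]] j0_min] := exists_minimal_nat rep_j.
exists nn0, j0; split=> [//||nn' j' le_j' eq_rep]; first by lia.
by apply: j0_min; exists nn'; rewrite eq_rep EN0.
Qed.

Section MinimalRepresentation.

Variables nn j : nat.
Hypothesis f_rep : f + c%:Z = (nn * a + j * d)%N.
Hypothesis j_min : forall nn' j' : nat,
  (j' <= k * nn')%N -> (nn' * a + j' * d = nn * a + j * d)%N -> (j <= j')%N.

Lemma pf_rep_not_dominated : ~ dominates (AA_cone a d k c) j (k%:Z * nn - j%:Z).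
Proof.
have [not_f_sg _] := f_pf.
move=> [m1 [m2 [[np [t [sum_m rel pos]] le_m1 le_m2]]]].
have [p2 Ep2] : exists p2 : nat, j%:Z - m1 = p2 by exists (absz (j%:Z - m1)%R); lia.
have le_np_nn : np <= nn by nia.
have [p1 Ep1] : exists p1 : nat, nn%:Z - np = p1 by exists (absz (nn%:Z - np)%R); lia.
have le_p2 : (p2 <= k * p1)%N by nia.
case: pos => [t_gt0|[t0 m1_gt0]].
- have [t' Et'] : exists t' : nat, t - 1 = t' by exists (absz (t - 1)%R); lia.
  apply: not_f_sg; exists (p1 * a + p2 * d + t' * c)%N; split; first by nia.
  by apply/in_sg_AA_gens; exists p1, p2, t'.
- by have := j_min le_p2 ltac:(nia); lia.
Qed.

Lemma pf_rep_segment (i : nat) : (i <= k)%N ->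
  dominates (AA_cone a d k c) (j%:Z + i%:Z) (k%:Z * nn - j%:Z + k%:Z - i%:Z).
Proof.
move=> le_ik; have [_ f_add] := f_pf.
have gi_sg : in_sg (AA_gens a d k c) (a + i * d).
  by apply/in_sg_AA_gens; exists 1%N, i, 0%N; split; lia.
have [N [EN /in_sg_AA_gens [nn' [j' [t [le_j' EN']]]]]] := f_add _ (ltn_addr _ a_gt0) gi_sg.
exists (j%:Z + i%:Z - j'%:Z), (k%:Z * nn - j%:Z + k%:Z - i%:Z - (k%:Z * nn' - j'%:Z)).
split; [| lia | lia].
by exists (nn%:Z + 1 - nn'%:Z), (t%:Z + 1); split; [lia | lia | left; lia].
Qed.

End MinimalRepresentation.

Lemma pf_maximal_gap : exists x y nn : int,
  [/\ maximal_gap k (AA_cone a d k c) x y, f + c%:Z = a%:Z * nn + d%:Z * x & x + y = k%:Z * nn].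
Proof.
have [nn [j [le_j f_rep j_min]]] := pf_minimal_rep.
exists j, (k%:Z * nn - j%:Z), nn; split; [split | lia | lia].
- by [].
- by lia.
- by apply/dvdzP; exists nn%:Z; lia.
- exact: pf_rep_not_dominated f_rep j_min.
- exact: pf_rep_segment f_rep.
Qed.

End PseudoFrobenius.

Theorem theorem3 (a d k c : nat) :
  (0 < a)%N -> (0 < d)%N -> (0 < k)%N -> (0 < c)%N ->
  gcd_seq (AA_gens a d k c) = 1%N ->
  forall l : seq int, uniq l ->
    (forall x, x \in l -> pseudo_frobenius (AA_gens a d k c) x) ->
    (size l <= 2 * k)%N.
Proof.
move=> a_gt0 _ k_gt0 c_gt0 _ l l_uniq l_pf.
have [code [code_lt code_inj]] := maximal_gap_code k
  (@AA_cone_total a d k c a_gt0) (@AA_cone_pos a d k c k_gt0 c_gt0)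
  (AA_cone_xaxis d k c a_gt0) (AA_cone_yaxis d k c a_gt0).
pose coded f v := exists x y nn : int, [/\ maximal_gap k (AA_cone a d k c) x y,
  f + c%:Z = a%:Z * nn + d%:Z * x, x + y = k%:Z * nn & code x y = v].
apply: (@uniq_size_le_code _ _ _ coded) => // [f /l_pf f_pf|f f' v _ _].
  have [x [y [nn [gap f_rep sum_xy]]]] := pf_maximal_gap a_gt0 k_gt0 c_gt0 f_pf.
  by exists (code x y); [exact: code_lt | exists x, y, nn].
move=> [x [y [nn [gap f_rep sum_xy <-]]]] [x' [y' [nn' [gap' f_rep' sum_xy' eq_code]]]].
case: (code_inj _ _ _ _ gap gap' (esym eq_code)) => eq_x eq_y; subst x' y'.
have eq_nn : nn = nn' by nia.
by subst nn'; lia.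
Qed.
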